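(* Fix $r^+\ge 8$. There is a constant $c_0=c_0(r^+)>1$ (depending only on $r^+$, not on $d$ or the bodies) such that for every convex body $K$ in $\mathbb{R}^d$, every $x\in\operatorname{int}(K)$, and every $y\in B_K(x,r^+)$, $$\tfrac{1}{c_0}A(x)\subseteq \mathcal{B}_K(y)\subseteq c_0A(x).$$
   Context: $K$ is a convex body (compact convex, nonempty interior). For $x\in\operatorname{int}(K)$, $A(x):=(K-x)\cap(x-K)$ (the Macbeath region $K\cap(2x-K)$ translated to the origin). $B_K(x,r)$ is the closed ball of radius $r$ about $x$ in the Hilbert metric $d_K(x,y)=\frac12\ln\left(\frac{\|y-x'\|}{\|x-x'\|}\frac{\|x-y'\|}{\|y-y'\|}\right)$, where $y'$ (resp. $x'$) is where the ray from $x$ through $y$ (resp. from $y$ through $x$) meets $\partial K$. For a convex body $E$ with $O\in\operatorname{int}E$, $\|v\|_E=\inf\{\lambda>0: v\in\lambda E\}$. The Hilbert Finsler ball at $y\in\operatorname{int}(K)$ is $\mathcal{B}_K(y)=\{v\in\mathbb{R}^d: \frac12(\|v\|_{K-y}+\|-v\|_{K-y})\le 1\}$. *)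

From HB Require Import structures.
From mathcomp Require Import all_boot all_order all_algebra.
From mathcomp Require Import all_classical all_reals all_analysis.
Set Implicit Arguments. Unset Strict Implicit. Unset Printing Implicit Defensive.
Import Order.TTheory GRing.Theory Num.Theory.
Import numFieldNormedType.Exports.
Local Open Scope classical_set_scope.
Local Open Scope ring_scope.

Section Defs.
Variables (R : realType) (d : nat).
Notation V := 'rV[R]_d.

Definition convex_set (K : set V) : Prop :=
  forall a b, K a -> K b -> forall t : R, 0 <= t <= 1 -> K ((1 - t) *: a + t *: b).

Definition convex_body (K : set V) : Prop :=
  compact K /\ convex_set K /\ (K°) !=set0.

Definition exit_param (K : set V) (p q : V) : R :=
  sup [set s : R | 0 <= s /\ K (p + s *: (q - p))].

Definition exit_point (K : set V) (p q : V) : V :=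
  p + exit_param K p q *: (q - p).

(* Hilbert distance d_K(x,y); y' = exit point of ray x->y, x' = exit point of ray y->x.
   Ratios of lengths along a line do not depend on the chosen norm. *)
Definition hilbert_dist (K : set V) (x y : V) : R :=
  if x == y then 0 else
  let y' := exit_point K x y in
  let x' := exit_point K y x in
  ln ((`|y - x'| / `|x - x'|) * (`|x - y'| / `|y - y'|)) / 2.

Definition hilbert_ball (K : set V) (x : V) (r : R) : set V :=
  [set y | (K°) y /\ hilbert_dist K x y <= r].

Definition gauge (E : set V) (v : V) : R :=
  inf [set l : R | 0 < l /\ exists2 e, E e & v = l *: e].

Definition translate (K : set V) (y : V) : set V := [set z - y | z in K].

Definition finsler_ball (K : set V) (y : V) : set V :=
  [set v | (gauge (translate K y) v + gauge (translate K y) (- v)) / 2 <= 1].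

Definition macbeath0 (K : set V) (x : V) : set V :=
  [set v | K (x + v) /\ K (x - v)].

Definition scale_set (c : R) (S : set V) : set V := [set c *: v | v in S].
End Defs.

From Pilot Require Import Defs.
From HB Require Import structures.
From mathcomp Require Import all_boot all_order all_algebra.
From mathcomp Require Import all_classical all_reals all_analysis.
From mathcomp Require Import ring lra.
Import Order.TTheory GRing.Theory Num.Theory.
Import numFieldNormedType.Exports.
Local Open Scope classical_set_scope.
Local Open Scope ring_scope.

(* Let x + s (y - x) and y + t (x - y) be the points where the rays x -> y and
   y -> x leave K, so that 2 d_K(x,y) = ln (s/(s-1) * t/(t-1)).  By convexity
   K contains y + l (K - x) for every l = 1 - 1/s' with 1 <= s' < s, and
   d_K(x,y) <= r forces s/(s-1) <= E := e^(2r), so some such l is >= 1/(2E);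
   symmetrically x + m (K - y) lies in K for some m >= 1/(2E).  The first
   homothety puts y +- A(x)/(2E) in K, i.e. A(x) in 2E times the Finsler ball
   at y; the second maps every v with ||v||_(K-y) < 3 into 6E A(x), which
   contains the Finsler ball.  Hence c0 = 6E. *)

Section HilbertGeometry.
Set Implicit Arguments.
Unset Strict Implicit.
Variables (R : realType) (d : nat).
Notation V := 'rV[R]_d.
Implicit Types (K : set V) (p q x y z v : V).

Definition homothety_in K (a b : V) (l : R) : Prop :=
  forall z, K z -> K (a + l *: (z - b)).

Lemma interior_ray K q v : (K°) q -> exists2 t : R, 0 < t & K (q + t *: v).
Proof.
move/nbhs_ballP => [e /= e0 hb].
have hv : 0 < `|v| + 1 by rewrite ltr_pwDr // normr_ge0.
set t := e / (2 * (`|v| + 1)).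
have t0 : 0 < t by rewrite /t divr_gt0 // mulr_gt0.
exists t => //; apply: hb.
rewrite -ball_normE /ball_ /= opprD addrA subrr add0r normrN normrZ gtr0_norm //.
have -> : e = 2 * (t * (`|v| + 1)) by rewrite /t; field; rewrite gt_eqF.
have := normr_ge0 v; nra.
Qed.

Lemma convex_set_segment K p q (t : R) : Defs.convex_set K -> K p -> K q ->
  0 <= t <= 1 -> K (p + t *: (q - p)).
Proof.
move=> cK Kp Kq t01.
have -> : p + t *: (q - p) = (1 - t) *: p + t *: q.
  by apply/rowP => i; rewrite !mxE; ring.
exact: (cK p q Kp Kq t t01).
Qed.

(* q + (1 - s^-1) (z - p) lies on the segment from z to p + s (q - p). *)
Lemma convex_homothety_in K p q (s : R) : Defs.convex_set K ->
  K (p + s *: (q - p)) -> 1 <= s -> homothety_in K q p (1 - s^-1).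
Proof.
move=> cK Ks s1 z Kz.
have s0 : s != 0 by rewrite gt_eqF //; lra.
have -> : q + (1 - s^-1) *: (z - p) = z + s^-1 *: ((p + s *: (q - p)) - z).
  by apply/rowP => i; rewrite !mxE; field.
by apply: convex_set_segment => //; rewrite invr_ge0 invf_le1; lra.
Qed.

Lemma gauge_ge0 (E : set V) v : 0 <= gauge E v.
Proof.
rewrite /gauge; set S := [set l : R | _].
have [[l Sl]|S0] := pselect (S !=set0).
  by apply: lb_le_inf; [exists l | move=> z [z0 _]; exact: ltW].
have -> : S = set0 by apply/seteqP; split => // z Sz; apply: S0; exists z.
by rewrite inf0.
Qed.

Lemma gauge_le (E : set V) v (l : R) e : 0 < l -> E e -> v = l *: e ->
  gauge E v <= l.
Proof.
move=> l0 Ee ->; apply: ge_inf; last by split => //; exists e.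
by exists 0 => z [z0 _]; exact: ltW.
Qed.

Lemma gauge_translate_lt K y v (a : R) : (K°) y -> gauge (translate K y) v < a ->
  exists l e, [/\ 0 < l, K (y + e), v = l *: e & l < a].
Proof.
move=> yi ga.
have [t t0 Kt] := interior_ray v yi.
have [|l [l0 [e [z Kz <-] ->]] la] := inf_lt _ ga.
  exists t^-1; split; first by rewrite invr_gt0.
  exists (t *: v); first by exists (y + t *: v) => //; rewrite addrC addKr.
  by rewrite scalerA mulVf ?scale1r // gt_eqF.
by exists l, (z - y); split => //; rewrite addrC subrK.
Qed.

Section ExitParam.
Variables (K : set V) (p q : V).
Hypotheses (cK : compact K) (qi : (K°) q) (pq : p != q).

Let S := [set s : R | 0 <= s /\ K (p + s *: (q - p))].

Lemma exit_param_has_sup : has_sup S.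
Proof.
have qp0 : 0 < `|q - p| by rewrite normr_gt0 subr_eq0 eq_sym.
have [M [_ hM]] := compact_bounded cK.
split; first by exists 1; split => //; rewrite scale1r addrC subrK; exact: interior_subset.
exists ((M + 1 + `|p|) / `|q - p|) => s [s0 Ks].
rewrite ler_pdivlMr //.
have hB : `|p + s *: (q - p)| <= M + 1 by apply: hM Ks; rewrite ltrDl.
have := ler_normB (p + s *: (q - p)) p.
rewrite addrAC subrr add0r normrZ ger0_norm //; lra.
Qed.

Lemma exit_param_gt1 : 1 < exit_param K p q.
Proof.
have [t t0 Kt] := interior_ray (q - p) qi.
have : S (1 + t).
  split; first by rewrite addr_ge0 // ltW.
  suff -> : p + (1 + t) *: (q - p) = q + t *: (q - p) by [].
  by apply/rowP => i; rewrite !mxE; ring.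
move/(sup_upper_bound exit_param_has_sup); rewrite /exit_param -/S; lra.
Qed.

(* The witness is 1 - s^-1 for a point p + s (q - p) of K with s beyond the
   midpoint of 1 and the exit parameter. *)
Lemma exit_param_homothety_in : Defs.convex_set K -> K p ->
  exists2 l, (exit_param K p q - 1) / (exit_param K p q + 1) <= l &
    homothety_in K q p l.
Proof.
move=> cvK Kp; have := exit_param_gt1.
rewrite /exit_param -/S; set sg := sup S => sg1.
have [|s [s0 Ks] hs] := sup_adherent (_ : 0 < (sg - 1) / 2) exit_param_has_sup.
  by rewrite divr_gt0 // subr_gt0.
have {}hs : (sg + 1) / 2 < s by move: hs; rewrite -/sg; lra.
exists (1 - s^-1); last by apply: convex_homothety_in => //; lra.
have s1 : 1 < s by lra.
have ss : s * s^-1 = 1 by rewrite mulfV // gt_eqF //; lra.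
have u0 : 0 < s^-1 by rewrite invr_gt0; lra.
rewrite ler_pdivrMr; [nra | lra].
Qed.

End ExitParam.

Lemma hilbert_dist_sym K x y : hilbert_dist K x y = hilbert_dist K y x.
Proof.
by rewrite /hilbert_dist eq_sym; case: eqP => // _; rewrite [X in ln X]mulrC.
Qed.

Lemma hilbert_dist_exit_param K x y : x != y ->
  1 < exit_param K x y -> 1 < exit_param K y x ->
  hilbert_dist K x y = ln (exit_param K y x / (exit_param K y x - 1) *
                           (exit_param K x y / (exit_param K x y - 1))) / 2.
Proof.
move=> xy; rewrite /hilbert_dist /exit_point (negbTE xy) /=.
set s := exit_param K x y; set t := exit_param K y x => s1 t1.
have n0 : 0 < `|y - x| by rewrite normr_gt0 subr_eq0 eq_sym.
have -> : y - (y + t *: (x - y)) = t *: (y - x).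
  by apply/rowP => i; rewrite !mxE; ring.
have -> : x - (y + t *: (x - y)) = (t - 1) *: (y - x).
  by apply/rowP => i; rewrite !mxE; ring.
have -> : x - (x + s *: (y - x)) = - (s *: (y - x)).
  by apply/rowP => i; rewrite !mxE; ring.
have -> : y - (x + s *: (y - x)) = - ((s - 1) *: (y - x)).
  by apply/rowP => i; rewrite !mxE; ring.
rewrite !normrN !normrZ !ger0_norm; try lra.
congr (ln _ / 2); field.
by do ![apply/andP; split]; rewrite ?gt_eqF //; lra.
Qed.

Lemma exit_ratio_homothety_bound (s E l : R) : 1 < s -> s / (s - 1) <= E ->
  (s - 1) / (s + 1) <= l -> 1 <= 2 * E * l.
Proof.
move=> s1; rewrite !ler_pdivrMr; try lra.
move=> h1 h2; have E1 : 1 <= E by nra.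
nra.
Qed.

Lemma hilbert_dist_homothety_in K x y (r : R) : convex_body K ->
  (K°) x -> (K°) y -> 0 <= r -> hilbert_dist K x y <= r ->
  exists2 l, 1 <= 2 * expR (2 * r) * l & homothety_in K y x l.
Proof.
move=> [cK [cvK _]] xi yi r0.
have E1 : 1 <= expR (2 * r) by have := expR_ge1Dx (2 * r); lra.
have [<- _|xy] := eqVneq x y.
  by exists 1; [lra | move=> z Kz; rewrite scale1r addrC subrK].
have s1 := exit_param_gt1 cK yi xy.
have t1 : 1 < exit_param K y x by apply: exit_param_gt1; rewrite // eq_sym.
rewrite hilbert_dist_exit_param //.
move: s1 t1; set s := exit_param K x y; set t := exit_param K y x => s1 t1 hd.
have ts1 : 1 <= t / (t - 1) by rewrite ler_pdivlMr; lra.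
have ss1 : 1 <= s / (s - 1) by rewrite ler_pdivlMr; lra.
have hP : t / (t - 1) * (s / (s - 1)) <= expR (2 * r).
  rewrite -[X in X <= _]lnK; last by rewrite posrE; apply: mulr_gt0; lra.
  by rewrite ler_expR; lra.
have [l hl Kl] := exit_param_homothety_in cK yi xy cvK (interior_subset xi).
by exists l => //; apply: (exit_ratio_homothety_bound s1 _ hl); nra.
Qed.

Lemma macbeath_sub_finsler K x y (l c : R) : homothety_in K y x l ->
  0 < l -> 1 <= c * l -> scale_set c^-1 (macbeath0 K x) `<=` finsler_ball K y.
Proof.
move=> Kl l0 cl _ [w [Kxw Kxmw] <-].
have c0 : c != 0 by rewrite gt_eqF //; nra.
have ln0 : l != 0 by rewrite gt_eqF.
have gl : forall u, K (x + u) -> gauge (translate K y) (c^-1 *: u) <= (c * l)^-1.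
  move=> u Ku; apply: (@gauge_le _ _ _ (l *: u)).
  - by rewrite invr_gt0; lra.
  - exists (y + l *: ((x + u) - x)); first exact: Kl.
    by rewrite addrC addKr addrC addKr.
  - by apply/rowP => i; rewrite !mxE; field; rewrite c0 ln0.
have g1 := gl _ Kxw; have g2 := gl _ Kxmw.
have : (c * l)^-1 <= 1 by rewrite invf_le1; lra.
rewrite /finsler_ball /= -scalerN; lra.
Qed.

Lemma gauge_homothety_in K x y (m c : R) u : Defs.convex_set K -> K x -> (K°) y ->
  0 < c -> homothety_in K x y m -> gauge (translate K y) u < c * m ->
  K (x + c^-1 *: u).
Proof.
move=> cvK Kx yi c0 Km gu.
have [l [e [l0 Ke -> lcm]]] := gauge_translate_lt yi gu.
have m0 : 0 < m by have := gauge_ge0 (translate K y) (l *: e); nra.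
have -> : x + c^-1 *: (l *: e) = x + (l / (c * m)) *: ((x + m *: ((y + e) - y)) - x).
  by apply/rowP => i; rewrite !mxE; field; rewrite !gt_eqF.
apply: convex_set_segment => //; first exact: Km.
by rewrite divr_ge0 ?ler_pdivrMr /=; try nra.
Qed.

Lemma finsler_sub_macbeath K x y (m c : R) : homothety_in K x y m ->
  Defs.convex_set K -> K x -> (K°) y -> 0 < c -> 2 < c * m ->
  finsler_ball K y `<=` scale_set c (macbeath0 K x).
Proof.
move=> Km cvK Kx yi c0 cm v; rewrite /finsler_ball /= => hv.
have ga := gauge_ge0 (translate K y) v; have gb := gauge_ge0 (translate K y) (- v).
exists (c^-1 *: v); last by rewrite scalerA mulfV ?scale1r // gt_eqF.
split; first by apply: (gauge_homothety_in cvK Kx yi c0 Km); lra.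
by rewrite -scalerN; apply: (gauge_homothety_in cvK Kx yi c0 Km); lra.
Qed.

End HilbertGeometry.

Theorem lemma3p3 (R : realType) (rplus : R) (hr : 8 <= rplus) :
  exists c0 : R, 1 < c0 /\
    forall (d : nat) (K : set 'rV[R]_d) (x y : 'rV[R]_d),
      convex_body K -> (K°) x -> hilbert_ball K x rplus y ->
      scale_set c0^-1 (macbeath0 K x) `<=` finsler_ball K y /\
      finsler_ball K y `<=` scale_set c0 (macbeath0 K x).
Proof.
set E := expR (2 * rplus).
have E1 : 1 <= E by have := expR_ge1Dx (2 * rplus); rewrite -/E; lra.
exists (6 * E); split; first lra.
move=> d K x y bK xi [yi hd]; have r0 : 0 <= rplus by lra.
have [l hl Kl] : exists2 l, 1 <= 2 * E * l & homothety_in K y x l.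
  exact: hilbert_dist_homothety_in.
have [m hm Km] : exists2 m, 1 <= 2 * E * m & homothety_in K x y m.
  by apply: hilbert_dist_homothety_in; rewrite // hilbert_dist_sym.
have [_ [cvK _]] := bK.
have E0 : 0 < 6 * E by lra.
split.
- by apply: (macbeath_sub_finsler Kl); nra.
- by apply: (finsler_sub_macbeath Km cvK (interior_subset xi) yi E0); nra.
Qed.
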